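(* Let $U$ be a nonempty open subset of $\mathbb{R}^d$ and let $(a_n)_{n\ge1}$ be a sequence of points of $U$ such that $\inf_\lambda\liminf_{j\to\infty}2^{-dj}\#\mathrm{M}((a_n)_{n\ge1};\lambda,j)>0$, the infimum over all nonempty dyadic cubes $\lambda\subseteq U$. Let $\mathcal{A}=\{a_n:n\ge1\}$ and define $H:\mathcal{A}\to(0,\infty)$ by $H(a)=(\min\{n\ge1:a=a_n\})^{1/d}$. Then $(\mathcal{A},H)$ is an optimal regular system in $U$.
   Context: Fix a norm $|\cdot|$ on $\mathbb{R}^d$, diameters taken with respect to it. Let $\mathcal{A}\subseteq\mathbb{R}^d$ be countably infinite and $H:\mathcal{A}\to(0,\infty)$. The pair $(\mathcal{A},H)$ is admissible if for every integer $m\ge1$ the set $\{a\in\mathcal{A}:|a|<m,\ H(a)\le m\}$ is finite. It is a regular system in an open set $U$ if it is admissible and there is $\kappa>0$ such that for every open ball $B\subseteq U$ there is $h_B>0$ such that for all $h>h_B$ there is $\mathcal{A}_{B,h}\subseteq\mathcal{A}\cap B$ with $\#\mathcal{A}_{B,h}\ge\kappa(\mathrm{diam}\,B)^dh^d$, $H(a)\le h$ for $a\in\mathcal{A}_{B,h}$, and $|a-a'|\ge1/h$ for distinct $a,a'\in\mathcal{A}_{B,h}$. It is an optimal system in $U$ if it is admissible and for every open ball $B$ there are $\kappa'_B,h'_B>0$ with $\#\{a\in\mathcal{A}\cap U\cap B:H(a)\le h\}\le\kappa'_Bh^d$ for $h>h'_B$. An optimal regular system is one that is both. A dyadic cube is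 $\lambda=2^{-j}(k+[0,1)^d)$, $j\in\mathbb{Z}$, $k\in\mathbb{Z}^d$, of generation $\langle\lambda\rangle=j$; $\mathrm{M}((x_n)_{n\ge1};\lambda,j)$ is the set of dyadic cubes $\lambda'\subseteq\lambda$ of generation $\langle\lambda\rangle+j$ containing some $x_n$ with $n\le2^{d\langle\lambda'\rangle}$. *)

From Stdlib Require Import Reals Lra List ZArith.
From Stdlib Require Fin.
Open Scope R_scope.

Definition pt (d : nat) := Fin.t d -> R.

Definition vsub {d} (x y : pt d) : pt d := fun i => x i - y i.
Definition vadd {d} (x y : pt d) : pt d := fun i => x i + y i.
Definition vscal {d} (c : R) (x : pt d) : pt d := fun i => c * x i.
Definition vzero {d} : pt d := fun _ => 0.

Definition is_norm {d} (N : pt d -> R) : Prop :=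
  (forall x, N x = 0 -> x = vzero) /\
  (forall c x, N (vscal c x) = Rabs c * N x) /\
  (forall x y, N (vadd x y) <= N x + N y).

Definition ball {d} (N : pt d -> R) (c : pt d) (r : R) : pt d -> Prop :=
  fun x => N (vsub x c) < r.

Definition subset {X} (A B : X -> Prop) : Prop := forall x, A x -> B x.

Definition is_open {d} (N : pt d -> R) (U : pt d -> Prop) : Prop :=
  forall x, U x -> exists r, r > 0 /\ subset (ball N x r) U.

Definition is_diam {d} (N : pt d -> R) (S : pt d -> Prop) (D : R) : Prop :=
  is_lub (fun t => exists x y, S x /\ S y /\ t = N (vsub x y)) D.

Definition dcube {d} (j : Z) (k : Fin.t d -> Z) : pt d -> Prop :=
  fun x => forall i, IZR (k i) * powerRZ 2 (- j) <= x i < (IZR (k i) + 1) * powerRZ 2 (- j).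

(* k' in M((a_n); lambda, j) where lambda = dcube j0 k: the cube dcube (j0+j) k'
   is contained in lambda and contains some a_n with 1 <= n <= 2^(d (j0+j)) *)
Definition inM {d} (a : nat -> pt d) (j0 : Z) (k : Fin.t d -> Z) (j : nat)
  (k' : Fin.t d -> Z) : Prop :=
  subset (dcube (j0 + Z.of_nat j) k') (dcube j0 k) /\
  exists n, (1 <= n)%nat /\ INR n <= powerRZ 2 (Z.of_nat d * (j0 + Z.of_nat j)) /\
            dcube (j0 + Z.of_nat j) k' (a n).

Definition card_ge {X} (P : X -> Prop) (n : nat) : Prop :=
  exists l : list X, NoDup l /\ length l = n /\ forall x, In x l -> P x.

Definition card_le_R {X} (P : X -> Prop) (t : R) : Prop :=
  forall l : list X, NoDup l -> (forall x, In x l -> P x) -> INR (length l) <= t.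

Definition countably_infinite {X} (A : X -> Prop) : Prop :=
  (exists f : nat -> X, forall x, A x <-> exists n, f n = x) /\
  ~ (exists l : list X, forall x, A x -> In x l).

Definition admissible {d} (N : pt d -> R) (A : pt d -> Prop) (H : pt d -> R) : Prop :=
  countably_infinite A /\ (forall a, A a -> H a > 0) /\
  forall m : nat, (1 <= m)%nat ->
    exists l : list (pt d), forall a, A a -> N a < INR m -> H a <= INR m -> In a l.

Definition regular_system {d} (N : pt d -> R) (A : pt d -> Prop) (H : pt d -> R)
  (U : pt d -> Prop) : Prop :=
  admissible N A H /\
  exists kappa, kappa > 0 /\
    forall c r, r > 0 -> subset (ball N c r) U ->
    forall D, is_diam N (ball N c r) D ->
    exists hB, hB > 0 /\ forall h, h > hB ->
      exists l : list (pt d),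
        NoDup l /\
        INR (length l) >= kappa * D ^ d * h ^ d /\
        (forall a, In a l -> A a /\ ball N c r a /\ H a <= h) /\
        (forall a a', In a l -> In a' l -> a <> a' -> N (vsub a a') >= 1 / h).

Definition optimal_system {d} (N : pt d -> R) (A : pt d -> Prop) (H : pt d -> R)
  (U : pt d -> Prop) : Prop :=
  admissible N A H /\
  forall c r, r > 0 ->
    exists kappa' hB', kappa' > 0 /\ hB' > 0 /\ forall h, h > hB' ->
      card_le_R (fun a => A a /\ U a /\ ball N c r a /\ H a <= h) (kappa' * h ^ d).

Definition optimal_regular_system {d} (N : pt d -> R) (A : pt d -> Prop)
  (H : pt d -> R) (U : pt d -> Prop) : Prop :=
  optimal_system N A H U /\ regular_system N A H U.

From Stdlib Require Import Reals List ZArith.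
From Stdlib Require Fin.
From Stdlib Require Import Lra Lia Classical ClassicalEpsilon FunctionalExtensionality.
Open Scope R_scope.

(* Since H(a) <= h means that the first index of a is at most h^d, at most about h^d
   points have height <= h, which is optimality.  For regularity, a ball of radius r
   contains a dyadic cube of side comparable to r/K, where N <= K max|x_i|.  At the
   generation g with 2^g ~ m h (m |x_i| <= N x) the density hypothesis provides
   ~ 2^(d j) marked subcubes, each containing some a_n with n <= 2^(d g) <= h^d, i.e. of
   height <= h.  Keeping only the subcubes whose integer indices share one parity pattern
   costs a factor 2^d and puts any two of them a full side 2^(-g) apart in some
   coordinate, hence at N-distance >= 1/h.  The same count shows that A is infinite.
   The constant m comes from the equivalence of norms, proved by induction on d. *)

(** * Norms on R^d *)

Definition seminorm {d} (N : pt d -> R) : Prop :=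
  (forall c x, N (vscal c x) = Rabs c * N x) /\
  (forall x y, N (vadd x y) <= N x + N y).

Lemma is_norm_seminorm {d} (N : pt d -> R) : is_norm N -> seminorm N.
Proof. intros [_ hs]; exact hs. Qed.

Section Seminorm.

Variables (d : nat) (N : pt d -> R).
Hypothesis hs : seminorm N.

Lemma seminorm_vzero : N vzero = 0.
Proof.
  replace (@vzero d) with (vscal 0 (@vzero d)).
  - rewrite (proj1 hs), Rabs_R0; ring.
  - apply functional_extensionality; intro i; unfold vscal, vzero; ring.
Qed.

Lemma seminorm_vopp x : N (vscal (-1) x) = N x.
Proof. rewrite (proj1 hs), Rabs_left by lra; ring. Qed.

Lemma seminorm_ge0 x : 0 <= N x.
Proof.
  assert (e : vadd x (vscal (-1) x) = vzero).
  { apply functional_extensionality; intro i; unfold vadd, vscal, vzero; ring. }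
  pose proof (proj2 hs x (vscal (-1) x)) as t.
  rewrite e, seminorm_vzero, seminorm_vopp in t. lra.
Qed.

Lemma seminorm_vsub_sym x y : N (vsub x y) = N (vsub y x).
Proof.
  rewrite <- seminorm_vopp. f_equal.
  apply functional_extensionality; intro i; unfold vsub, vscal; ring.
Qed.

Lemma seminorm_vsub_triangle x y z : N (vsub x y) <= N (vsub x z) + N (vsub z y).
Proof.
  replace (vsub x y) with (vadd (vsub x z) (vsub z y)); [apply hs|].
  apply functional_extensionality; intro i; unfold vsub, vadd; ring.
Qed.

Lemma seminorm_vsub_le x y : N (vsub x y) <= N x + N y.
Proof.
  replace (vsub x y) with (vadd x (vscal (-1) y)).
  - rewrite <- (seminorm_vopp y). apply hs.
  - apply functional_extensionality; intro i; unfold vsub, vadd, vscal; ring.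
Qed.

Lemma seminorm_vsub_diag x : N (vsub x x) = 0.
Proof.
  rewrite <- seminorm_vzero. f_equal.
  apply functional_extensionality; intro i; unfold vsub, vzero; ring.
Qed.

Lemma is_diam_ball_bounds c r D : 0 < r -> is_diam N (ball N c r) D -> 0 <= D <= 2 * r.
Proof.
  intros hr [hub hlub]. split.
  - apply hub. exists c, c. unfold ball. rewrite seminorm_vsub_diag. repeat split; lra.
  - apply hlub. intros t [x [y [hx [hy ->]]]]. unfold ball in hx, hy.
    pose proof (seminorm_vsub_triangle x y c) as htri.
    rewrite (seminorm_vsub_sym c y) in htri. lra.
Qed.

End Seminorm.

Definition vcons {d} (t : R) (y : pt d) : pt (S d) :=
  fun i => Fin.caseS' i (fun _ => R) t y.

Definition vtl {d} (x : pt (S d)) : pt d := fun j => x (Fin.FS j).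

Lemma vcons_eta {d} (x : pt (S d)) : x = vcons (x Fin.F1) (vtl x).
Proof. apply functional_extensionality; intro i; pattern i; apply Fin.caseS'; reflexivity. Qed.

Lemma vadd_vcons {d} t t' (y y' : pt d) :
  vadd (vcons t y) (vcons t' y') = vcons (t + t') (vadd y y').
Proof. apply functional_extensionality; intro i; pattern i; apply Fin.caseS'; reflexivity. Qed.

Lemma vscal_vcons {d} c t (y : pt d) : vscal c (vcons t y) = vcons (c * t) (vscal c y).
Proof. apply functional_extensionality; intro i; pattern i; apply Fin.caseS'; reflexivity. Qed.

Lemma vsub_vcons {d} t t' (y y' : pt d) :
  vsub (vcons t y) (vcons t' y') = vcons (t - t') (vsub y y').
Proof. apply functional_extensionality; intro i; pattern i; apply Fin.caseS'; reflexivity. Qed.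

Lemma seminorm_vcons0 {d} (N : pt (S d) -> R) :
  seminorm N -> seminorm (fun y : pt d => N (vcons 0 y)).
Proof.
  intros [hscal hadd]; split.
  - intros c x. rewrite <- hscal, vscal_vcons, Rmult_0_r. reflexivity.
  - intros x y. rewrite <- (Rplus_0_l 0) at 1. rewrite <- vadd_vcons. apply hadd.
Qed.

Lemma is_norm_vcons0 {d} (N : pt (S d) -> R) :
  is_norm N -> is_norm (fun y : pt d => N (vcons 0 y)).
Proof.
  intros hN. split; [|apply seminorm_vcons0, is_norm_seminorm, hN].
  intros x hx. apply (proj1 hN) in hx.
  apply functional_extensionality; intro j. exact (f_equal (fun f => f (Fin.FS j)) hx).
Qed.

Lemma seminorm_le_sup_coord : forall d (N : pt d -> R), seminorm N ->
  exists K, 0 < K /\ forall x M, 0 <= M -> (forall i, Rabs (x i) <= M) -> N x <= K * M.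
Proof.
  induction d as [|d IH]; intros N hs.
  - exists 1; split; [lra|]. intros x M hM _.
    replace x with (@vzero 0); [rewrite (seminorm_vzero _ N hs); lra|].
    apply functional_extensionality; intro i; exact (Fin.case0 (fun i => vzero i = x i) i).
  - destruct (IH _ (seminorm_vcons0 N hs)) as [K [hK hb]].
    set (e0 := vcons 1 (@vzero d)).
    pose proof (seminorm_ge0 _ N hs e0).
    exists (N e0 + K); split; [lra|]. intros x M hM hx.
    assert (e : x = vadd (vscal (x Fin.F1) e0) (vcons 0 (vtl x))).
    { rewrite (vcons_eta x) at 1. unfold e0. rewrite vscal_vcons, vadd_vcons. f_equal; [ring|].
      apply functional_extensionality; intro j; unfold vadd, vscal, vzero; ring. }
    rewrite e. eapply Rle_trans; [apply hs|]. rewrite (proj1 hs).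
    assert (N (vcons 0 (vtl x)) <= K * M) by (apply hb; auto; intro j; apply hx).
    assert (Rabs (x Fin.F1) * N e0 <= M * N e0) by (apply Rmult_le_compat_r; auto).
    nra.
Qed.
Lemma eventually_forall_fin : forall d (P : Fin.t d -> nat -> Prop),
  (forall i, exists K, forall k, (K <= k)%nat -> P i k) ->
  exists K, forall i k, (K <= k)%nat -> P i k.
Proof.
  induction d as [|d IH]; intros P hP.
  - exists 0%nat. intro i; exact (Fin.case0 (fun i => forall k, _ -> P i k) i).
  - destruct (hP Fin.F1) as [K1 h1].
    destruct (IH (fun i k => P (Fin.FS i) k)) as [K2 h2]; [intro i; apply hP|].
    exists (Nat.max K1 K2). intros i k hk. pattern i; apply Fin.caseS'.
    + apply h1; lia.
    + intro j; apply h2; lia.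
Qed.

Lemma cauchy_coordinates_converge {d} (y : nat -> pt d) :
  (forall i, Cauchy_crit (fun k => y k i)) ->
  exists ys : pt d, forall e, 0 < e ->
    exists K, forall i k, (K <= k)%nat -> Rabs (ys i - y k i) < e.
Proof.
  intro hC. destruct (choice (fun i l => Un_cv (fun k => y k i) l)) as [ys hys].
  { intro i. destruct (R_complete _ (hC i)) as [l hl]. exists l; exact hl. }
  exists ys. intros e he. apply eventually_forall_fin. intro i.
  destruct (hys i e he) as [K hK]. exists K. intros k hk.
  rewrite Rabs_minus_sym. exact (hK k hk).
Qed.

Lemma inv_INR_S_eventually_lt e : 0 < e ->
  exists n0, forall k, (n0 <= k)%nat -> / INR (S k) < e.
Proof.
  intro he. destruct (archimed_cor1 e he) as [n0 [hn0 hpos]]. exists n0. intros k hk.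
  eapply Rle_lt_trans; [|exact hn0]. apply Rinv_le_contravar.
  - apply lt_0_INR; exact hpos.
  - apply le_INR; lia.
Qed.

Lemma norm_vcons1_bounded_below {d} (N : pt (S d) -> R) : is_norm N ->
  (exists m, 0 < m /\ forall y i, m * Rabs (y i) <= N (vcons 0 y)) ->
  exists g, 0 < g /\ forall y, g <= N (vcons 1 y).
Proof.
  intros hN [m [hm hlb]]. pose proof (is_norm_seminorm N hN) as hs.
  destruct (seminorm_le_sup_coord d _ (seminorm_vcons0 N hs)) as [K [hK hub]].
  (* Otherwise [N (vcons 1 (y k)) -> 0] for some [y k]; by the lower bound on the hyperplane
     the [y k] converge, to some [y] with [vcons 1 y = 0]. *)
  apply NNPP; intro hneg.
  assert (hsmall : forall k : nat, exists y, N (vcons 1 y) < / INR (S k)).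
  { intro k. apply NNPP; intro hk. apply hneg. exists (/ INR (S k)). split.
    - apply Rinv_0_lt_compat, lt_0_INR; lia.
    - intro y. apply Rnot_lt_le; intro hy. apply hk; exists y; exact hy. }
  destruct (choice _ hsmall) as [y hy].
  assert (hC : forall i, Cauchy_crit (fun k => y k i)).
  { intros i e he. destruct (inv_INR_S_eventually_lt (e * m / 2)) as [n0 hn0]; [nra|].
    exists n0. intros n k hn hk. unfold R_dist.
    pose proof (hlb (vsub (y n) (y k)) i) as t.
    replace (vcons 0 (vsub (y n) (y k))) with (vsub (vcons 1 (y n)) (vcons 1 (y k))) in t
      by (rewrite vsub_vcons; f_equal; ring).
    pose proof (seminorm_vsub_le _ N hs (vcons 1 (y n)) (vcons 1 (y k))).
    pose proof (hy n); pose proof (hy k); pose proof (hn0 n hn); pose proof (hn0 k hk).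
    change (vsub (y n) (y k) i) with (y n i - y k i) in t.
    apply (Rmult_lt_reg_l m); [exact hm|]. lra. }
  destruct (cauchy_coordinates_converge y hC) as [ys hys].
  assert (hz : N (vcons 1 ys) = 0).
  { apply Rle_antisym; [|apply (seminorm_ge0 _ N hs)].
    apply Rnot_lt_le; intro hpos.
    destruct (hys (N (vcons 1 ys) / (2 * K))) as [K0 hK0]; [apply Rdiv_lt_0_compat; lra|].
    destruct (inv_INR_S_eventually_lt (N (vcons 1 ys) / 2)) as [n1 hn1]; [lra|].
    set (k := Nat.max K0 n1).
    assert (e : vcons 1 ys = vadd (vcons 1 (y k)) (vcons 0 (vsub ys (y k)))).
    { rewrite vadd_vcons. f_equal; [ring|].
      apply functional_extensionality; intro i; unfold vadd, vsub; ring. }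
    pose proof (proj2 hs (vcons 1 (y k)) (vcons 0 (vsub ys (y k)))) as t. rewrite <- e in t.
    assert (htail : N (vcons 0 (vsub ys (y k))) <= K * (N (vcons 1 ys) / (2 * K))).
    { apply hub; [apply Rlt_le, Rdiv_lt_0_compat; lra|].
      intro i. apply Rlt_le, hK0. unfold k; lia. }
    replace (K * (N (vcons 1 ys) / (2 * K))) with (N (vcons 1 ys) / 2) in htail
      by (field; lra).
    pose proof (hy k). pose proof (hn1 k ltac:(unfold k; lia)). lra. }
  apply (proj1 hN) in hz. apply (f_equal (fun f => f Fin.F1)) in hz.
  simpl in hz. unfold vzero in hz. lra.
Qed.

Lemma norm_ge_coord : forall d (N : pt d -> R), is_norm N ->
  exists m, 0 < m /\ forall x i, m * Rabs (x i) <= N x.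
Proof.
  induction d as [|d IH]; intros N hN.
  - exists 1; split; [lra|]. intros x i; exact (Fin.case0 (fun i => 1 * Rabs (x i) <= N x) i).
  - pose proof (is_norm_seminorm N hN) as hs.
    pose proof (IH _ (is_norm_vcons0 N hN)) as hIH.
    destruct hIH as [m' [hm' hlb]].
    destruct (norm_vcons1_bounded_below N hN (ex_intro _ m' (conj hm' hlb))) as [g [hg hgap]].
    set (e0 := vcons 1 (@vzero d)). pose proof (seminorm_ge0 _ N hs e0).
    set (C := 1 + N e0 / g).
    assert (hC : 0 < C) by (unfold C; assert (0 <= N e0 / g) by (unfold Rdiv; apply Rmult_le_pos; [lra|apply Rlt_le, Rinv_0_lt_compat; lra]); lra).
    assert (hhead : forall t y, g * Rabs t <= N (vcons t y)).
    { intros t y. destruct (Req_dec t 0) as [->|ht].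
      - rewrite Rabs_R0, Rmult_0_r. apply (seminorm_ge0 _ N hs).
      - replace (vcons t y) with (vscal t (vcons 1 (vscal (/ t) y))).
        + rewrite (proj1 hs). pose proof (hgap (vscal (/ t) y)). pose proof (Rabs_pos t). nra.
        + rewrite vscal_vcons. f_equal; [ring|].
          apply functional_extensionality; intro i; unfold vscal; field; exact ht. }
    assert (htail : forall t y j, m' * Rabs (y j) <= C * N (vcons t y)).
    { intros t y j. pose proof (hlb y j) as t1.
      replace (vcons 0 y) with (vadd (vcons t y) (vscal (- t) e0)) in t1.
      2:{ unfold e0. rewrite vscal_vcons, vadd_vcons. f_equal; [ring|].
          apply functional_extensionality; intro i; unfold vadd, vscal, vzero; ring. }
      pose proof (proj2 hs (vcons t y) (vscal (- t) e0)) as t2.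
      rewrite (proj1 hs), Rabs_Ropp in t2. pose proof (hhead t y).
      assert (Rabs t * N e0 <= N (vcons t y) / g * N e0).
      { apply Rmult_le_compat_r; [lra|]. apply (Rmult_le_reg_l g); [exact hg|].
        field_simplify; lra. }
      replace (C * N (vcons t y)) with (N (vcons t y) + N (vcons t y) / g * N e0)
        by (unfold C; field; lra). lra. }
    exists (Rmin g (m' / C)). split; [apply Rmin_glb_lt; [exact hg|apply Rdiv_lt_0_compat; lra]|].
    intros x i. rewrite (vcons_eta x). pattern i; apply Fin.caseS'.
    + eapply Rle_trans; [|apply hhead].
      apply Rmult_le_compat_r; [apply Rabs_pos|apply Rmin_l].
    + intro j. eapply Rle_trans; [apply Rmult_le_compat_r; [apply Rabs_pos|apply Rmin_r]|].
      pose proof (htail (x Fin.F1) (vtl x) j).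
      change (vcons (x Fin.F1) (vtl x) (Fin.FS j)) with (vtl x j).
      apply (Rmult_le_reg_l C); [exact hC|].
      replace (C * (m' / C * Rabs (vtl x j))) with (m' * Rabs (vtl x j)) by (field; lra). lra.
Qed.

(** * Dyadic cubes *)

Lemma powerRZ2_le z w : (z <= w)%Z -> powerRZ 2 z <= powerRZ 2 w.
Proof.
  intro h. rewrite !powerRZ_Rpower by lra. apply Rle_Rpower; [lra|]. apply IZR_le, h.
Qed.

Lemma powerRZ2_lt_inv z w : powerRZ 2 z < powerRZ 2 w -> (z < w)%Z.
Proof.
  intro h. destruct (Z_lt_le_dec z w) as [l|l]; [exact l|]. apply powerRZ2_le in l. lra.
Qed.

Lemma powerRZ2_floor t : 0 < t -> exists f : Z, powerRZ 2 f <= t < powerRZ 2 (f + 1).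
Proof.
  intro ht. assert (hl : 0 < ln 2) by (rewrite <- ln_1; apply ln_increasing; lra).
  set (u := ln t / ln 2). set (f := Int_part u). exists f.
  destruct (base_Int_part u) as [h1 h2]. fold f in h1, h2.
  rewrite !powerRZ_Rpower, plus_IZR by lra. unfold Rpower.
  rewrite <- (exp_ln t) by exact ht.
  replace (ln t) with (u * ln 2) by (unfold u; field; lra).
  split.
  - destruct (Rle_lt_or_eq_dec _ _ h1) as [hlt| ->]; [|lra].
    apply Rlt_le, exp_increasing. nra.
  - apply exp_increasing. nra.
Qed.

Lemma powerRZ2_mul_nat (n : nat) z : powerRZ 2 (Z.of_nat n * z) = powerRZ 2 z ^ n.
Proof.
  induction n as [|n IH]; [reflexivity|].
  replace (Z.of_nat (S n) * z)%Z with (z + Z.of_nat n * z)%Z by lia.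
  rewrite powerRZ_add, IH by lra. reflexivity.
Qed.

Lemma INR_le_powerRZ2 (j : nat) : INR j <= powerRZ 2 (Z.of_nat j).
Proof.
  rewrite <- pow_powerRZ. replace 2 with (INR 2) by reflexivity. rewrite <- pow_INR.
  apply le_INR, Nat.lt_le_incl, Nat.pow_gt_lin_r. lia.
Qed.

Lemma exists_nat_gt t : exists n : nat, t < INR n.
Proof.
  destruct (archimed t) as [h _]. exists (Z.to_nat (up t)).
  destruct (Z_le_gt_dec 0 (up t)).
  - rewrite INR_IZR_INZ, Z2Nat.id by exact l. exact h.
  - replace (Z.to_nat (up t)) with 0%nat by lia. apply Z.gt_lt, IZR_lt in g. simpl. lra.
Qed.

Definition dcube_index {d} (g : Z) (x : pt d) : Fin.t d -> Z :=
  fun i => Int_part (x i * powerRZ 2 g).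

Lemma dcube_iff {d} g (k : Fin.t d -> Z) (x : pt d) :
  dcube g k x <-> forall i, IZR (k i) <= x i * powerRZ 2 g < IZR (k i) + 1.
Proof.
  assert (hP : 0 < powerRZ 2 g) by (apply powerRZ_lt; lra).
  unfold dcube. rewrite powerRZ_neg'. set (P := powerRZ 2 g) in *.
  assert (hQ : 0 < / P) by (apply Rinv_0_lt_compat; exact hP).
  split; intros h i; specialize (h i); destruct h as [h1 h2].
  - split.
    + replace (IZR (k i)) with (IZR (k i) * / P * P) by (field; lra).
      apply Rmult_le_compat_r; lra.
    + replace (IZR (k i) + 1) with ((IZR (k i) + 1) * / P * P) by (field; lra).
      apply Rmult_lt_compat_r; lra.
  - replace (x i) with (x i * P * / P) by (field; lra).
    split; [apply Rmult_le_compat_r|apply Rmult_lt_compat_r]; lra.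
Qed.

Lemma dcube_index_spec {d} g (x : pt d) : dcube g (dcube_index g x) x.
Proof.
  apply dcube_iff. intro i. unfold dcube_index.
  destruct (base_Int_part (x i * powerRZ 2 g)); split; lra.
Qed.

Lemma dcube_index_unique {d} g (k : Fin.t d -> Z) (x : pt d) :
  dcube g k x -> dcube_index g x = k.
Proof.
  intro hx. pose proof (proj1 (dcube_iff g k x) hx) as h.
  apply functional_extensionality; intro i.
  symmetry. apply Int_part_spec. specialize (h i). lra.
Qed.

Lemma dcube_coord_close {d} g (k : Fin.t d -> Z) (x y : pt d) i :
  dcube g k x -> dcube g k y -> Rabs (x i - y i) < powerRZ 2 (- g).
Proof. intros hx hy. specialize (hx i); specialize (hy i). apply Rabs_def1; lra. Qed.

Lemma dcube_coord_far {d} g (k k' : Fin.t d -> Z) (x y : pt d) i :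
  dcube g k x -> dcube g k' y -> (2 <= Z.abs (k i - k' i))%Z ->
  powerRZ 2 (- g) < Rabs (x i - y i).
Proof.
  intros hx hy hk. specialize (hx i); specialize (hy i).
  assert (0 < powerRZ 2 (- g)) by (apply powerRZ_lt; lra).
  destruct (Z_le_gt_dec (k i) (k' i)).
  - assert (IZR (k i) + 2 <= IZR (k' i)) by (rewrite <- plus_IZR; apply IZR_le; lia).
    rewrite Rabs_minus_sym, Rabs_right; nra.
  - assert (IZR (k' i) + 2 <= IZR (k i)) by (rewrite <- plus_IZR; apply IZR_le; lia).
    rewrite Rabs_right; nra.
Qed.

Lemma dcube_far_of_parity {d} g (k k' : Fin.t d -> Z) (x y : pt d) :
  dcube g k x -> dcube g k' y -> k <> k' ->
  (forall i, Z.even (k i) = Z.even (k' i)) ->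
  exists i, powerRZ 2 (- g) < Rabs (x i - y i).
Proof.
  intros hx hy hne hpar.
  destruct (not_all_ex_not _ _ (fun h => hne (functional_extensionality _ _ h))) as [i hi].
  exists i. apply (dcube_coord_far g k k'); auto.
  assert (Z.even (k i - k' i) = true) as hev
    by (rewrite Z.even_sub, hpar; destruct (Z.even (k' i)); reflexivity).
  apply Z.even_spec in hev. destruct hev as [q hq]. lia.
Qed.

Fixpoint fin_list (n : nat) : list (Fin.t n) :=
  match n with 0 => nil | S m => Fin.F1 :: map Fin.FS (fin_list m) end.

Lemma length_fin_list n : length (fin_list n) = n.
Proof. induction n; simpl; [reflexivity|]. rewrite length_map; auto. Qed.

Lemma in_fin_list n (i : Fin.t n) : In i (fin_list n).
Proof.
  induction n. exact (Fin.case0 _ i).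
  pattern i; apply Fin.caseS'; [left; reflexivity|]. intro j; right; apply in_map, IHn.
Qed.

Lemma sublist_agreeing_on_test {X} (q : X -> bool) (l : list X) :
  exists l1, incl l1 l /\ (NoDup l -> NoDup l1) /\ (length l <= 2 * length l1)%nat /\
    forall x y, In x l1 -> In y l1 -> q x = q y.
Proof.
  pose proof (filter_length q l).
  destruct (Nat.le_gt_cases (length (filter (fun x => negb (q x)) l)) (length (filter q l))).
  - exists (filter q l). repeat split.
    + intros x hx; apply filter_In in hx; tauto.
    + apply NoDup_filter.
    + lia.
    + intros x y hx hy. apply filter_In in hx, hy. destruct hx as [_ ->], hy as [_ ->]; reflexivity.
  - exists (filter (fun x => negb (q x)) l). repeat split.
    + intros x hx; apply filter_In in hx; tauto.
    + apply NoDup_filter.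
    + lia.
    + intros x y hx hy. apply filter_In in hx, hy. destruct hx as [_ hx], hy as [_ hy].
      destruct (q x), (q y); simpl in *; congruence.
Qed.

Lemma sublist_agreeing_on_tests {X} (F : list (X -> bool)) (l : list X) :
  exists l', incl l' l /\ (NoDup l -> NoDup l') /\
    (length l <= 2 ^ length F * length l')%nat /\
    forall q, In q F -> forall x y, In x l' -> In y l' -> q x = q y.
Proof.
  revert l. induction F as [|q F IH]; intro l.
  - exists l. repeat split; auto. intros x hx; exact hx. simpl; lia. intros q [].
  - destruct (sublist_agreeing_on_test q l) as [l1 [h1 [h2 [h3 h4]]]].
    destruct (IH l1) as [l' [g1 [g2 [g3 g4]]]].
    exists l'. repeat split.
    + intros x hx; apply h1, g1, hx.
    + intro hn; apply g2, h2, hn.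
    + simpl. lia.
    + intros q' [<-|hq] x y hx hy; [apply h4; apply g1; auto|apply g4; auto].
Qed.

Lemma parity_sublist {d} (ks : list (Fin.t d -> Z)) :
  exists ks', incl ks' ks /\ (NoDup ks -> NoDup ks') /\
    (length ks <= 2 ^ d * length ks')%nat /\
    forall k k' i, In k ks' -> In k' ks' -> Z.even (k i) = Z.even (k' i).
Proof.
  destruct (sublist_agreeing_on_tests (map (fun i k => Z.even (k i)) (fin_list d)) ks)
    as [ks' [h1 [h2 [h3 h4]]]].
  rewrite length_map, length_fin_list in h3.
  exists ks'. repeat split; auto. intros k k' i hk hk'.
  apply (h4 (fun k => Z.even (k i))); auto. apply in_map_iff. exists i; split; auto. apply in_fin_list.
Qed.

Lemma dyadic_cube_in_ball {d} (N : pt d -> R) K : 0 < K ->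
  (forall x M, 0 <= M -> (forall i, Rabs (x i) <= M) -> N x <= K * M) ->
  forall c r, 0 < r ->
  exists j0, subset (dcube j0 (dcube_index j0 c)) (ball N c r) /\ r / (4 * K) < powerRZ 2 (- j0).
Proof.
  intros hK hub c r hr.
  destruct (powerRZ2_floor (r / (2 * K))) as [f [hf1 hf2]]; [apply Rdiv_lt_0_compat; lra|].
  exists (- f)%Z. rewrite Z.opp_involutive. split.
  - intros x hx. unfold ball.
    assert (N (vsub x c) <= K * powerRZ 2 f).
    { apply hub; [apply powerRZ_le; lra|]. intro i. apply Rlt_le.
      pose proof (dcube_coord_close (- f) _ x c i hx (dcube_index_spec (- f) c)) as h.
      rewrite Z.opp_involutive in h. exact h. }
    assert (K * powerRZ 2 f <= K * (r / (2 * K))) by (apply Rmult_le_compat_l; lra).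
    replace (K * (r / (2 * K))) with (r / 2) in * by (field; lra). lra.
  - rewrite powerRZ_add in hf2 by lra. simpl in hf2.
    replace (r / (4 * K)) with (r / (2 * K) / 2) by (field; lra). lra.
Qed.

(** * Marked cubes and the heights of the sequence *)

Lemma separated_marked_points {d} (a : nat -> pt d) j0 k j (ks : list (Fin.t d -> Z)) :
  NoDup ks -> (forall k', In k' ks -> inM a j0 k j k') ->
  exists l, NoDup l /\ (length ks <= 2 ^ d * length l)%nat /\
    (forall p, In p l -> dcube j0 k p /\ exists n, (1 <= n)%nat /\
       INR n <= powerRZ 2 (j0 + Z.of_nat j) ^ d /\ a n = p) /\
    (forall p q, In p l -> In q l -> p <> q ->
       exists i, powerRZ 2 (- (j0 + Z.of_nat j)) < Rabs (p i - q i)).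
Proof.
  intros hnd hmarked. set (g := (j0 + Z.of_nat j)%Z).
  destruct (parity_sublist ks) as [ks' [hsub [hnd' [hlen hpar]]]].
  destruct (choice (fun k' n => In k' ks -> (1 <= n)%nat /\
      INR n <= powerRZ 2 (Z.of_nat d * g) /\ dcube g k' (a n) /\ subset (dcube g k') (dcube j0 k)))
    as [nk hnk].
  { intro k'. destruct (classic (In k' ks)) as [hk|hk]; [|exists 0%nat; tauto].
    destruct (hmarked k' hk) as [hs [n [h1 [h2 h3]]]]. exists n. auto. }
  assert (hidx : forall k', In k' ks' -> dcube_index g (a (nk k')) = k').
  { intros k' hk'. apply dcube_index_unique, hnk, hsub, hk'. }
  exists (map (fun k' => a (nk k')) ks'). split; [|split; [|split]].
  - apply NoDup_map_NoDup_ForallPairs; [|exact (hnd' hnd)].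
    intros k1 k2 h1 h2 he. rewrite <- (hidx k1 h1), <- (hidx k2 h2), he. reflexivity.
  - rewrite length_map; exact hlen.
  - intros p hp. apply in_map_iff in hp. destruct hp as [k' [<- hk']].
    destruct (hnk k' (hsub k' hk')) as [h1 [h2 [h3 h4]]].
    split; [apply h4, h3|]. exists (nk k'). rewrite <- powerRZ2_mul_nat. auto.
  - intros p q hp hq hne.
    apply in_map_iff in hp, hq. destruct hp as [k1 [<- h1]], hq as [k2 [<- h2]].
    apply (dcube_far_of_parity g k1 k2).
    + apply hnk, hsub, h1.
    + apply hnk, hsub, h2.
    + intros ->. apply hne. reflexivity.
    + intro i. apply hpar; assumption.
Qed.

Lemma count_lower_bound (d P Q : nat) c s t : 0 < c -> 0 <= s <= t ->
  c * t ^ d < 2 * INR P -> (P <= 2 ^ d * Q)%nat -> c / 2 ^ (d + 1) * s ^ d <= INR Q.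
Proof.
  intros hc hst hP hPQ. apply le_INR in hPQ. rewrite mult_INR, pow_INR in hPQ.
  replace (INR 2) with 2 in hPQ by reflexivity.
  assert (s ^ d <= t ^ d) by (apply pow_incr; exact hst).
  assert (h2 : 0 < 2 ^ d) by (apply pow_lt; lra).
  rewrite pow_add. apply (Rmult_le_reg_l (2 ^ d * 2 ^ 1)); [simpl; lra|].
  replace (2 ^ d * 2 ^ 1 * (c / (2 ^ d * 2 ^ 1) * s ^ d)) with (c * s ^ d) by (field; lra).
  simpl. nra.
Qed.

Lemma separation_of_coord {d} (N : pt d -> R) m g h (x y : pt d) i :
  0 < m -> 0 < h -> powerRZ 2 g <= m * h ->
  (forall v j, m * Rabs (v j) <= N v) -> powerRZ 2 (- g) < Rabs (x i - y i) ->
  N (vsub x y) >= 1 / h.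
Proof.
  intros hm hh hg hlb hxy. rewrite powerRZ_neg' in hxy.
  assert (0 < powerRZ 2 g) by (apply powerRZ_lt; lra).
  assert (1 / h <= m * / powerRZ 2 g).
  { replace (1 / h) with (m * / (m * h)) by (field; lra).
    apply Rmult_le_compat_l; [lra|]. apply Rinv_le_contravar; lra. }
  assert (m * / powerRZ 2 g <= m * Rabs (x i - y i)) by (apply Rmult_le_compat_l; lra).
  pose proof (hlb (vsub x y) i) as hN. change (vsub x y i) with (x i - y i) in hN. lra.
Qed.

Lemma Rpower_inv_le_iff d x h : (1 <= d)%nat -> 0 < x -> 0 < h ->
  Rpower x (/ INR d) <= h <-> x <= h ^ d.
Proof.
  intros hd hx hh. assert (hdpos : 0 < INR d) by (apply lt_0_INR; lia).
  assert (hxe : x = Rpower (Rpower x (/ INR d)) (INR d))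
    by (rewrite Rpower_mult, Rinv_l, Rpower_1 by lra; reflexivity).
  assert (hhe : h = Rpower (h ^ d) (/ INR d))
    by (rewrite <- Rpower_pow, Rpower_mult, Rinv_r, Rpower_1 by lra; reflexivity).
  split; intro hle.
  - rewrite hxe, <- Rpower_pow by exact hh. apply Rle_Rpower_l; [lra|].
    split; [apply exp_pos|exact hle].
  - rewrite hhe. apply Rle_Rpower_l; [apply Rlt_le, Rinv_0_lt_compat; lra|]. split; auto.
Qed.

Section DenseSequence.

Variables (d : nat) (a : nat -> pt d) (A : pt d -> Prop) (H : pt d -> R).
Hypothesis hd : (1 <= d)%nat.
Hypothesis hA : forall x, A x <-> exists n, (1 <= n)%nat /\ a n = x.
Hypothesis hH : forall n, (1 <= n)%nat -> (forall m, (1 <= m < n)%nat -> a m <> a n) ->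
  H (a n) = Rpower (INR n) (/ INR d).

Lemma H_least_index x : A x -> exists n0, (1 <= n0)%nat /\ a n0 = x /\
  H x = Rpower (INR n0) (/ INR d) /\ forall n, (1 <= n)%nat -> a n = x -> (n0 <= n)%nat.
Proof.
  intro hx. apply hA in hx.
  destruct (Wf_nat.dec_inh_nat_subset_has_unique_least_element
              (fun n => (1 <= n)%nat /\ a n = x)) as [n0 [[[h1 h2] hmin] _]];
    [intro n; apply classic|exact hx|].
  exists n0. repeat split; auto.
  rewrite <- h2. apply hH; [exact h1|].
  intros m hm he. specialize (hmin m (conj (proj1 hm) (eq_trans he h2))). lia.
Qed.

Lemma H_pos x : A x -> H x > 0.
Proof. intro hx. destruct (H_least_index x hx) as [n0 [_ [_ [-> _]]]]. apply exp_pos. Qed.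

Lemma H_le_of_index n h : (1 <= n)%nat -> 0 < h -> INR n <= h ^ d -> H (a n) <= h.
Proof.
  intros hn hh hnh.
  assert (hx : A (a n)) by (apply hA; exists n; auto).
  destruct (H_least_index (a n) hx) as [n0 [h1 [_ [-> hmin]]]].
  apply Rpower_inv_le_iff; [exact hd|apply lt_0_INR; lia|exact hh|].
  apply (Rle_trans _ (INR n)); [apply le_INR, hmin; auto|exact hnh].
Qed.

Lemma H_sublevel_bound h : 1 <= h ->
  exists l, INR (length l) <= 2 * h ^ d /\ forall x, A x -> H x <= h -> In x l.
Proof.
  intro hh. assert (hhd : 1 <= h ^ d) by (apply pow_R1_Rle; exact hh).
  destruct (archimed (h ^ d)) as [hup1 hup2].
  assert (hup : (0 <= up (h ^ d))%Z) by (apply le_IZR; lra).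
  set (M := Z.to_nat (up (h ^ d))).
  assert (hM : INR M = IZR (up (h ^ d))) by (unfold M; rewrite INR_IZR_INZ, Z2Nat.id; auto).
  exists (map a (seq 1 M)). split.
  - rewrite length_map, length_seq. lra.
  - intros x hx hHx. destruct (H_least_index x hx) as [n0 [h1 [<- [h3 _]]]].
    apply in_map, in_seq. rewrite h3 in hHx.
    apply Rpower_inv_le_iff in hHx; [|exact hd|apply lt_0_INR; lia|lra].
    assert (INR n0 < INR M) as hlt by lra. apply INR_lt in hlt. lia.
Qed.

Lemma A_enumerated : exists f : nat -> pt d, forall x, A x <-> exists n, f n = x.
Proof.
  exists (fun n => a (S n)). intro x. rewrite hA. split.
  - intros [n [hn he]]. exists (n - 1)%nat. replace (S (n - 1)) with n by lia. exact he.
  - intros [n he]. exists (S n). split; [lia|exact he].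
Qed.

Lemma optimal_system_sequence (N : pt d -> R) (U : pt d -> Prop) :
  admissible N A H -> optimal_system N A H U.
Proof.
  intro hadm. split; [exact hadm|]. intros c r hr. exists 2, 1. split; [lra|split; [lra|]].
  intros h hh l hnd hl.
  destruct (H_sublevel_bound h ltac:(lra)) as [l' [hlen hin]].
  eapply Rle_trans; [|exact hlen]. apply le_INR, NoDup_incl_length; [exact hnd|].
  intros x hx. destruct (hl x hx) as [hAx [_ [_ hHx]]]. apply hin; assumption.
Qed.

Variables (N : pt d -> R) (U : pt d -> Prop) (c : R).
Hypothesis hN : is_norm N.
Hypothesis hc : c > 0.
Hypothesis hdense : forall (j0 : Z) (k : Fin.t d -> Z), subset (dcube j0 k) U ->
  forall eps, eps > 0 -> exists J : nat, forall j : nat, (J <= j)%nat ->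
    exists m : nat, card_ge (inM a j0 k j) m /\
                    powerRZ 2 (- (Z.of_nat d * Z.of_nat j)) * INR m > c - eps.

Lemma many_marked_cubes j0 k : subset (dcube j0 k) U ->
  exists J : nat, forall j : nat, (J <= j)%nat -> exists ks, NoDup ks /\
    c * powerRZ 2 (Z.of_nat j) ^ d < 2 * INR (length ks) /\
    forall k', In k' ks -> inM a j0 k j k'.
Proof.
  intro hsub. destruct (hdense j0 k hsub (c / 2)) as [J hJ]; [lra|].
  exists J. intros j hj. destruct (hJ j hj) as [m [[ks [hnd [hlen hin]]] hm]].
  exists ks. split; [exact hnd|split; [|exact hin]].
  rewrite powerRZ_neg', powerRZ2_mul_nat in hm. rewrite hlen.
  assert (0 < powerRZ 2 (Z.of_nat j) ^ d) by (apply pow_lt, powerRZ_lt; lra).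
  apply (Rmult_lt_compat_l (powerRZ 2 (Z.of_nat j) ^ d)) in hm; [|assumption].
  rewrite <- Rmult_assoc, Rinv_r in hm by lra. lra.
Qed.

Lemma A_not_finite : is_open N U -> (exists x, U x) -> ~ exists l, forall x, A x -> In x l.
Proof.
  intros hUo [x0 hx0] [l hl].
  destruct (hUo x0 hx0) as [r [hr hball]].
  destruct (seminorm_le_sup_coord d N (is_norm_seminorm N hN)) as [K [hK hub]].
  destruct (dyadic_cube_in_ball N K hK hub x0 r hr) as [j0 [hcube _]].
  destruct (many_marked_cubes j0 (dcube_index j0 x0) (fun y hy => hball y (hcube y hy)))
    as [J hJ].
  destruct (exists_nat_gt (2 * INR (length l) / c)) as [n1 hn1].
  set (j := Nat.max J n1).
  destruct (hJ j ltac:(unfold j; lia)) as [ks [hnd [hcount hmarked]]].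
  assert (hincl : incl ks (map (dcube_index (j0 + Z.of_nat j)) l)).
  { intros k' hk'. destruct (hmarked k' hk') as [_ [n [hn [_ hkn]]]].
    rewrite <- (dcube_index_unique _ _ _ hkn). apply in_map, hl, hA. exists n; auto. }
  apply NoDup_incl_length in hincl; [|exact hnd]. rewrite length_map in hincl.
  apply le_INR in hincl.
  assert (INR n1 <= INR j) by (apply le_INR; unfold j; lia).
  assert (h2j : INR j <= powerRZ 2 (Z.of_nat j) ^ d).
  { eapply Rle_trans; [apply INR_le_powerRZ2|]. rewrite <- (pow_1 (powerRZ 2 _)) at 1.
    apply Rle_pow; [|exact hd]. apply (powerRZ2_le 0). lia. }
  apply (Rmult_lt_compat_l c) in hn1; [|exact hc].
  replace (c * (2 * INR (length l) / c)) with (2 * INR (length l)) in hn1 by (field; lra).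
  nra.
Qed.

Lemma admissible_sequence : is_open N U -> (exists x, U x) -> admissible N A H.
Proof.
  intros hUo hUne. split; [split|split].
  - exact A_enumerated.
  - exact (A_not_finite hUo hUne).
  - exact H_pos.
  - intros m hm. destruct (H_sublevel_bound (INR m)) as [l [_ hl]].
    + apply (le_INR 1), hm.
    + exists l. intros x hx _ hHx. apply hl; assumption.
Qed.

Lemma separated_points_in_cube m j0 k :
  0 < m <= 1 -> (forall v i, m * Rabs (v i) <= N v) -> subset (dcube j0 k) U ->
  exists hB, hB > 0 /\ forall h, h > hB -> exists l : list (pt d), NoDup l /\
    c / 2 ^ (d + 1) * (m * h / 2 * powerRZ 2 (- j0)) ^ d <= INR (length l) /\
    (forall x, In x l -> A x /\ dcube j0 k x /\ H x <= h) /\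
    (forall x x', In x l -> In x' l -> x <> x' -> N (vsub x x') >= 1 / h).
Proof.
  intros [hm hm1] hlb hsub. destruct (many_marked_cubes j0 k hsub) as [J hJ].
  assert (hP : 0 < powerRZ 2 (j0 + Z.of_nat J + 1)) by (apply powerRZ_lt; lra).
  exists (powerRZ 2 (j0 + Z.of_nat J + 1) / m). split; [apply Rdiv_lt_0_compat; lra|].
  intros h hh.
  assert (hmh : powerRZ 2 (j0 + Z.of_nat J + 1) < m * h).
  { apply (Rmult_lt_compat_l m) in hh; [|lra].
    replace (m * (powerRZ 2 (j0 + Z.of_nat J + 1) / m)) with (powerRZ 2 (j0 + Z.of_nat J + 1))
      in hh by (field; lra). exact hh. }
  assert (hh0 : 0 < h) by nra.
  destruct (powerRZ2_floor (m * h)) as [g [hg1 hg2]]; [nra|].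
  assert (hgJ : (j0 + Z.of_nat J + 1 < g + 1)%Z) by (apply powerRZ2_lt_inv; lra).
  set (j := Z.to_nat (g - j0)).
  assert (hj : (j0 + Z.of_nat j)%Z = g) by (unfold j; lia).
  destruct (hJ j ltac:(lia)) as [ks [hnd [hcount hmarked]]].
  destruct (separated_marked_points a j0 _ j ks hnd hmarked) as [l [hl [hlen [hin hsep]]]].
  rewrite hj in hin, hsep.
  exists l. split; [exact hl|split; [|split]].
  - apply (count_lower_bound d (length ks) (length l) c _ (powerRZ 2 (Z.of_nat j)));
      [exact hc| |exact hcount|exact hlen].
    replace (Z.of_nat j) with (g + - j0)%Z by lia. rewrite powerRZ_add by lra.
    rewrite powerRZ_add in hg2 by lra. simpl in hg2.
    assert (0 < powerRZ 2 (- j0)) by (apply powerRZ_lt; lra).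
    split; [apply Rmult_le_pos; lra|]. apply Rmult_le_compat_r; lra.
  - intros x hx. destruct (hin x hx) as [hxk [n [hn [hnb <-]]]].
    split; [apply hA; exists n; auto|split; [exact hxk|]].
    apply H_le_of_index; [exact hn|exact hh0|].
    eapply Rle_trans; [exact hnb|]. apply pow_incr. split; [apply powerRZ_le; lra|nra].
  - intros x x' hx hx' hne. destruct (hsep x x' hx hx' hne) as [i hi].
    exact (separation_of_coord N m g h x x' i hm hh0 hg1 hlb hi).
Qed.

Lemma regular_sequence :
  exists kappa, kappa > 0 /\
    forall cc r, r > 0 -> subset (ball N cc r) U ->
    forall D, is_diam N (ball N cc r) D ->
    exists hB, hB > 0 /\ forall h, h > hB ->
      exists l : list (pt d), NoDup l /\ INR (length l) >= kappa * D ^ d * h ^ d /\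
        (forall x, In x l -> A x /\ ball N cc r x /\ H x <= h) /\
        (forall x x', In x l -> In x' l -> x <> x' -> N (vsub x x') >= 1 / h).
Proof.
  pose proof (is_norm_seminorm N hN) as hs.
  destruct (seminorm_le_sup_coord d N hs) as [K [hK hub]].
  destruct (norm_ge_coord d N hN) as [m0 [hm0 hlb]].
  set (m := Rmin m0 1).
  assert (hm : 0 < m <= 1) by (split; [apply Rmin_glb_lt; lra|apply Rmin_r]).
  assert (hmlb : forall x i, m * Rabs (x i) <= N x).
  { intros x i. eapply Rle_trans; [|apply hlb].
    apply Rmult_le_compat_r; [apply Rabs_pos|apply Rmin_l]. }
  exists (c / 2 ^ (d + 1) * (m / (16 * K)) ^ d). split.
  { apply Rmult_lt_0_compat; [apply Rdiv_lt_0_compat|apply pow_lt, Rdiv_lt_0_compat];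
      try apply pow_lt; lra. }
  intros cc r hr hsub D hD.
  destruct (is_diam_ball_bounds d N hs cc r D hr hD) as [hD0 hD2].
  destruct (dyadic_cube_in_ball N K hK hub cc r hr) as [j0 [hcube hside]].
  destruct (separated_points_in_cube m j0 (dcube_index j0 cc) hm hmlb
              (fun y hy => hsub y (hcube y hy))) as [hB [hB0 hpoints]].
  exists hB. split; [exact hB0|]. intros h hh.
  destruct (hpoints h hh) as [l [hl [hlen [hin hsep]]]].
  assert (hh0 : 0 < h) by lra.
  exists l. split; [exact hl|split; [|split; [|exact hsep]]].
  - assert (hscale : m / (16 * K) * D * h <= m * h / 2 * powerRZ 2 (- j0)).
    { replace (m / (16 * K) * D * h) with (m * h / 2 * (D / 2 / (4 * K))) by (field; lra).
      apply Rmult_le_compat_l; [nra|]. apply Rlt_le. eapply Rle_lt_trans; [|exact hside].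
      apply Rmult_le_compat_r; [apply Rlt_le, Rinv_0_lt_compat|]; lra. }
    apply Rle_ge. eapply Rle_trans; [|exact hlen].
    replace (c / 2 ^ (d + 1) * (m / (16 * K)) ^ d * D ^ d * h ^ d)
      with (c / 2 ^ (d + 1) * (m / (16 * K) * D * h) ^ d) by (rewrite !Rpow_mult_distr; ring).
    apply Rmult_le_compat_l; [apply Rlt_le, Rdiv_lt_0_compat; [|apply pow_lt]; lra|].
    apply pow_incr. split; [|exact hscale].
    apply Rmult_le_pos; [apply Rmult_le_pos; [apply Rlt_le, Rdiv_lt_0_compat|]|]; lra.
  - intros x hx. destruct (hin x hx) as [hAx [hxk hHx]]. split; [|split]; auto.
Qed.

End DenseSequence.

Theorem proposition9p4 (d : nat) (hd : (1 <= d)%nat) (N : pt d -> R) (hN : is_norm N)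
  (U : pt d -> Prop) (hUo : is_open N U) (hUne : exists x, U x)
  (a : nat -> pt d) (haU : forall n, (1 <= n)%nat -> U (a n))
  (hdense : exists c, c > 0 /\
     forall (j0 : Z) (k : Fin.t d -> Z), subset (dcube j0 k) U ->
     forall eps, eps > 0 -> exists J : nat, forall j : nat, (J <= j)%nat ->
       exists m : nat, card_ge (inM a j0 k j) m /\
                       powerRZ 2 (- (Z.of_nat d * Z.of_nat j)) * INR m > c - eps)
  (A : pt d -> Prop) (hA : forall x, A x <-> exists n, (1 <= n)%nat /\ a n = x)
  (H : pt d -> R)
  (hH : forall n, (1 <= n)%nat -> (forall m, (1 <= m < n)%nat -> a m <> a n) ->
        H (a n) = Rpower (INR n) (/ INR d)) :
  optimal_regular_system N A H U.
Proof.
  destruct hdense as [c [hc hmarked]].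
  assert (hadm : admissible N A H)
    by exact (admissible_sequence d a A H hd hA hH N U c hN hc hmarked hUo hUne).
  split; [|split; [exact hadm|]].
  - exact (optimal_system_sequence d a A H hd hA hH N U hadm).
  - exact (regular_sequence d a A H hd hA hH N U c hN hc hmarked).
Qed.
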